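(* Let $k\ge 1$, $n\ge 2$ and $\mathbf C=(c_0,\dots,c_k)\in\{0,1\}^{k+1}$. Let $\mathbf H_n=(h_0,\dots,h_k)$ with $h_\beta=\binom{k}{\beta}\sum_{j=1}^{n-1}\frac{1}{j^\beta}$, and $\mathbf H_n\mathbf C^T=\sum_{\beta=0}^k h_\beta c_\beta$. For $1\le m\le n$ define $$O_{\mathbf C\max}(n,m+c_k-1)=\frac{(n-1)!^k}{(m-1)!}\,(\mathbf H_n\mathbf C^T)^{m-1}\prod_{i=1}^{n-m}F_{i+1}(\mathbf C').$$ Then $O_{\mathbf C\max}(n,m+c_k-1)\ge O_{\mathbf C}(n,m+c_k-1)$ for all $1\le m\le n$.
   Context: Fix integers $k\ge 1$, $n\ge 1$ and $\mathbf C=(c_0,c_1,\dots,c_k)\in\{0,1\}^{k+1}$; put $\mathbf C'=(1,\dots,1)-\mathbf C$. Consider $k$-tuples $(\pi_1,\dots,\pi_k)$ of permutations of $\{1,\dots,n\}$. A position $\alpha$ is a record of a permutation $\pi$ if $\pi(\alpha)<\pi(\alpha')$ for every $\alpha'<\alpha$ (position $1$ is always a record); equivalently records index the minimal elements of the points $(\alpha,\pi(\alpha))$ under strict componentwise domination. For a tuple, let $l_\alpha$ be the number of $\beta\in\{1,\dots,k\}$ for which $\alpha$ is a record of $\pi_\beta$ (so $l_1=k$). The $\mathbf C$ sequential optimization set of the tuple is $S=\{\alpha:c_{l_\alpha}=1\}$, with weight $|S|$. For an integer $m$, $O_{\mathbf C}(n,m)$ is the number of $k$-tuples whose weight equals $m$.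 For $j\ge 2$ and $X=(x_0,\dots,x_k)\in\mathbb R^{k+1}$, $F_j(X)=\sum_{\beta=0}^k\binom{k}{\beta}\frac{x_\beta}{(j-1)^\beta}$. Empty products equal $1$. *)

From HB Require Import structures.
From mathcomp Require Import all_boot all_order all_algebra all_fingroup.
Unset Printing Implicit Defensive.
Import Order.TTheory GRing.Theory Num.Theory.

(* Positions and values {1..n} are encoded as 'I_n = {0..n-1} (order-preserving shift). *)

Definition is_record (n : nat) (pi : {perm 'I_n}) (a : 'I_n) : bool :=
  [forall a' : 'I_n, (a' < a)%N ==> (pi a < pi a')%N].

Definition ptuple (k n : nat) := {ffun 'I_k -> {perm 'I_n}}.

Definition lcount (k n : nat) (t : ptuple k n) (a : 'I_n) : nat :=
  #|[set b : 'I_k | is_record n (t b) a]|.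

Definition optset (k n : nat) (C : {ffun 'I_k.+1 -> bool}) (t : ptuple k n) : {set 'I_n} :=
  [set a : 'I_n | C (inord (lcount k n t a))].

Definition weight (k n : nat) (C : {ffun 'I_k.+1 -> bool}) (t : ptuple k n) : nat :=
  #|optset k n C t|.

Definition O_C (k n : nat) (C : {ffun 'I_k.+1 -> bool}) (m : nat) : nat :=
  #|[set t : ptuple k n | weight k n C t == m]|.

Local Open Scope ring_scope.

Definition Fj (k j : nat) (X : 'I_k.+1 -> rat) : rat :=
  \sum_(b < k.+1) ('C(k, nat_of_ord b))%:R * X b / ((j - 1)%:R ^+ b).

Definition Cprime (k : nat) (C : {ffun 'I_k.+1 -> bool}) : 'I_k.+1 -> rat :=
  fun b => 1 - (C b)%:R.

Definition hcoef (k n : nat) (b : 'I_k.+1) : rat :=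
  ('C(k, nat_of_ord b))%:R * \sum_(1 <= j < n) (((j%:R : rat) ^+ (nat_of_ord b))^-1).

Definition HC (k n : nat) (C : {ffun 'I_k.+1 -> bool}) : rat :=
  \sum_(b < k.+1) @hcoef k n b * (C b)%:R.

Definition O_Cmax (k n : nat) (C : {ffun 'I_k.+1 -> bool}) (m : nat) : rat :=
  ((n.-1)`! ^ k)%:R / ((m.-1)`!)%:R * @HC k n C ^+ (m.-1)
  * \prod_(1 <= i < (n - m).+1) @Fj k i.+1 (Cprime k C).

(* A k-tuple of permutations of n+1 points is a k-tuple of permutations of n points extended
   by a last position, whose value in the beta-th permutation has some rank v_beta in 0..n.
   The new position is a record of pi_beta iff v_beta = 0, and the old records are unchanged,
   so its l is the number of zeros of v.  Counting the v with b zeros, 'C(k, b) n^(k-b), gives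
   O_C(n+1, w) = n^k (F_{n+1}(C) O_C(n, w-1) + F_{n+1}(C') O_C(n, w)).  The first position is
   a record of every permutation, whence the shift by c_k.  Induction on this recursion, using
   X^(j+1) + (j+1) x X^j <= (X + x)^(j+1) and that F_i(C') decreases in i, yields
   O_C(n, j + c_k) j! <= (n-1)!^k (H_n C^T)^j prod_(i=2)^(n-j) F_i(C'). *)

From HB Require Import structures.
From mathcomp Require Import all_boot all_order all_algebra all_fingroup.
From mathcomp Require Import zify ring.
Import Order.TTheory GRing.Theory Num.Theory.

Lemma ltn_bump2 h i j : (bump h i < bump h j)%N = (i < j)%N.
Proof. by rewrite !ltnNge leq_bump2. Qed.

Lemma card_set_sum (T : finType) (P : pred T) : #|[set x | P x]| = \sum_x P x.
Proof. by rewrite -sum1dep_card big_mkcond; apply: eq_bigr => x _; case: (P x). Qed.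

Lemma inord_max n : inord n = ord_max :> 'I_n.+1.
Proof. by apply: val_inj; rewrite /= inordK. Qed.

Section FiberCount.

Variables (I J : finType) (y : J).

Lemma card_ffun_fiber (Z : {set I}) :
  #|[set f : {ffun I -> J} | [set i | f i == y] == Z]| = #|J|.-1 ^ #|~: Z|.
Proof.
pose F i := if i \in Z then pred1 y else predC1 y.
have -> : [set f : {ffun I -> J} | [set i | f i == y] == Z] = [set f in family F].
  apply/setP => f; rewrite !inE; apply/eqP/familyP => [f_Z i|f_F].
    by rewrite /F -f_Z inE; case: eqP => [->|/eqP]; rewrite !inE ?eqxx.
  by apply/setP => i; move: (f_F i); rewrite /F !inE; case: (i \in Z) => // /negbTE.
rewrite cardsE card_family foldrE big_image /= (bigID (mem Z)) /=.
rewrite big1 ?mul1n; last by move=> i i_Z; rewrite /F i_Z card1.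
rewrite (eq_bigr (fun=> #|J|.-1)); last by move=> i /negbTE i_Z; rewrite /F i_Z cardC1.
by rewrite prod_nat_const; congr (_ ^ _); apply: eq_card => i; rewrite !inE.
Qed.

Lemma card_ffun_fiber_size m :
  #|[set f : {ffun I -> J} | #|[set i | f i == y]| == m]| = 'C(#|I|, m) * #|J|.-1 ^ (#|I| - m).
Proof.
rewrite -sum1dep_card.
rewrite (partition_big (fun f : {ffun I -> J} => [set i | f i == y]) (fun Z => #|Z| == m)) //=.
rewrite (eq_bigr (fun=> #|J|.-1 ^ (#|I| - m))) => [|Z /eqP Z_m].
  by rewrite sum_nat_const -cardsE card_draws.
rewrite sum1dep_card -[#|I|](cardsC Z) Z_m addKn -card_ffun_fiber.
by apply: eq_card => f; rewrite !inE andb_idl // => /eqP ->; rewrite Z_m.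
Qed.

End FiberCount.

Section Records.

Variables (n : nat) (v : 'I_n.+1) (s : {perm 'I_n}).

Lemma is_record_lift_perm_lift i :
  is_record n.+1 (lift_perm ord_max v s) (lift ord_max i) = is_record n s i.
Proof.
apply/forallP/forallP => rec_i a; apply/implyP.
  by have /implyP := rec_i (lift ord_max a); rewrite !lift_max !lift_perm_lift /= ltn_bump2.
case: (unliftP ord_max a) => [a'|] -> lt_a.
  by rewrite !lift_perm_lift /= ltn_bump2 (implyP (rec_i a')) // -(lift_max i) -(lift_max a').
by move: (ltn_ord i) lt_a; rewrite lift_max /=; lia.
Qed.

Lemma is_record_lift_perm_max :
  is_record n.+1 (lift_perm ord_max v s) ord_max = (v == ord0).
Proof.
apply/idP/eqP => [rec_max|->]; last first.
  apply/forallP => a; apply/implyP; rewrite lift_perm_id.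
  by case: (unliftP ord_max a) => [a'|] ->; rewrite ?ltnn // lift_perm_lift /= /bump leq0n.
pose p := ((lift_perm ord_max v s)^-1)%g ord0.
case: (unliftP ord_max p) => [p'|] p_eq.
  by have := forallP rec_max p; rewrite {1}p_eq lift_max ltn_ord /p permKV ltn0.
by have := permKV (lift_perm ord_max v s) ord0; rewrite -/p p_eq lift_perm_id.
Qed.

End Records.

Lemma is_record_ord0 n (pi : {perm 'I_n.+1}) : is_record n.+1 pi ord0.
Proof. by apply/forallP => a; rewrite ltn0. Qed.

Section Extension.

Variables (k n : nat).

Definition zeros (v : {ffun 'I_k -> 'I_n.+1}) : nat := #|[set b | v b == ord0]|.

Definition lift_ptuple (tv : ptuple k n * {ffun 'I_k -> 'I_n.+1}) : ptuple k n.+1 :=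
  [ffun b => lift_perm ord_max (tv.2 b) (tv.1 b)].

Lemma lcount_lift_ptuple_lift t v a :
  lcount k n.+1 (lift_ptuple (t, v)) (lift ord_max a) = lcount k n t a.
Proof. by apply: eq_card => b; rewrite !inE ffunE is_record_lift_perm_lift. Qed.

Lemma lcount_lift_ptuple_max t v : lcount k n.+1 (lift_ptuple (t, v)) ord_max = zeros v.
Proof. by apply: eq_card => b; rewrite !inE ffunE is_record_lift_perm_max. Qed.

Lemma weight_lift_ptuple C t v :
  weight k n.+1 C (lift_ptuple (t, v)) = weight k n C t + C (inord (zeros v)).
Proof.
rewrite /weight /optset !card_set_sum big_ord_recr /= lcount_lift_ptuple_max.
congr (_ + _); apply: eq_bigr => a _.
have -> : widen_ord (leqnSn n) a = lift ord_max a.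
  by apply: val_inj; rewrite /= /bump leqNgt ltn_ord.
by rewrite lcount_lift_ptuple_lift.
Qed.

Lemma lift_ptuple_inj : injective lift_ptuple.
Proof.
move=> [t1 v1] [t2 v2] /ffunP eq_t.
have eq_v : v1 = v2.
  apply/ffunP => b; move: (eq_t b); rewrite !ffunE /=.
  by move=> /(congr1 (fun p : {perm _} => p ord_max)); rewrite !lift_perm_id.
rewrite -eq_v; congr pair; apply/ffunP => b; apply/permP => a.
move: (eq_t b); rewrite !ffunE /= eq_v => /(congr1 (fun p : {perm _} => p (lift ord_max a))).
by rewrite !lift_perm_lift => /lift_inj.
Qed.

Lemma lift_ptuple_bij : bijective lift_ptuple.
Proof.
apply: inj_card_bij; first exact: lift_ptuple_inj.
by rewrite card_prod !card_ffun !card_Sn !card_ord factS expnMn mulnC.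
Qed.

Definition ext_count (P : pred 'I_k.+1) : nat :=
  #|[set v : {ffun 'I_k -> 'I_n.+1} | P (inord (zeros v))]|.

Lemma O_C_lift C w :
  O_C k n.+1 C w = ext_count C * (if w is w'.+1 then O_C k n C w' else 0)
                   + ext_count (fun b => ~~ C b) * O_C k n C w.
Proof.
rewrite /O_C /ext_count !card_set_sum (reindex lift_ptuple) /=; last first.
  exact/onW_bij/lift_ptuple_bij.
rewrite -(pair_big xpredT xpredT
  (fun t v => (weight k n.+1 C (lift_ptuple (t, v)) == w : nat))).
rewrite exchange_big !big_distrl -big_split /=.
apply: eq_bigr => v _; under eq_bigr do rewrite weight_lift_ptuple.
case: (C _); rewrite /= ?mul1n ?mul0n ?add0n ?addn0.
  case: w => [|w]; first by rewrite big1 // => t _; rewrite addn1.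
  by rewrite card_set_sum; apply: eq_bigr => t _; rewrite addn1 eqSS.
by apply: eq_bigr => t _; rewrite addn0.
Qed.

End Extension.

Arguments zeros {k n} v.

Section FirstPosition.

Variables (k : nat) (C : {ffun 'I_k.+1 -> bool}).

Lemma lcount_ord0 n (t : ptuple k n.+1) : lcount k n.+1 t ord0 = k.
Proof.
by rewrite /lcount -[RHS]card_ord -cardsT; apply: eq_card => b; rewrite !inE is_record_ord0.
Qed.

Lemma ord0_in_optset n (t : ptuple k n.+1) : (ord0 \in optset k n.+1 C t) = C ord_max.
Proof. by rewrite inE lcount_ord0 inord_max. Qed.

Lemma O_C_1 w : O_C k 1 C w = (w == C ord_max).
Proof.
have weight1 t : weight k 1 C t = C ord_max.
  by rewrite /weight /optset card_set_sum big_ord1 lcount_ord0 inord_max.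
rewrite /O_C card_set_sum; under eq_bigr do rewrite weight1.
by rewrite sum_nat_const card_ffun card_Sn !card_ord exp1n mul1n eq_sym.
Qed.

Lemma O_C_0 n : C ord_max -> O_C k n.+1 C 0 = 0.
Proof.
move=> c_k; apply/eqP; rewrite cards_eq0; apply/eqP/setP => t; rewrite !inE.
by apply/negbTE; rewrite -lt0n; apply/card_gt0P; exists ord0; rewrite ord0_in_optset.
Qed.

End FirstPosition.

Local Open Scope ring_scope.

Lemma exprSD_ge_lin (R : numDomainType) (a b : R) j : 0 <= a -> 0 <= b ->
  a ^+ j.+1 + j.+1%:R * b * a ^+ j <= (a + b) ^+ j.+1.
Proof.
move=> a_ge0 b_ge0; elim: j => [|j IH]; first by rewrite expr1 expr0 mulr1 mul1r.
have ab_ge0 : 0 <= a + b by rewrite addr_ge0.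
apply: le_trans (ler_wpM2l ab_ge0 IH).
have -> : (a + b) * (a ^+ j.+1 + j.+1%:R * b * a ^+ j)
    = a ^+ j.+2 + j.+2%:R * b * a ^+ j.+1 + b * (j.+1%:R * b * a ^+ j).
  by rewrite !exprS -[j.+2]addn1 -[j.+1]addn1 !natrD; ring.
by rewrite lerDl !mulr_ge0 ?exprn_ge0.
Qed.

Section WeightedPascal.

Variable R : numDomainType.
Variables (w x y : nat -> R) (f : nat -> nat -> R).
Hypotheses (w_ge0 : forall i, 0 <= w i) (x_ge0 : forall i, 0 <= x i).
Hypothesis y_ge0 : forall i, 0 <= y i.
Hypothesis y_nonincr : forall i j, (i <= j)%N -> y j <= y i.
Hypothesis f0 : forall j, f 0 j = (j == 0)%:R.
Hypothesis fS0 : forall n, f n.+1 0 = w n * (y n * f n 0).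
Hypothesis fSS : forall n j, f n.+1 j.+1 = w n * (x n * f n j + y n * f n j.+1).

Lemma pascal_eq0 n j : (n < j)%N -> f n j = 0.
Proof.
elim: n j => [|n IH] [|j] // lt_nj.
by rewrite fSS !IH ?(ltnW lt_nj) // !mulr0 addr0 mulr0.
Qed.

Lemma pascal_bound n j :
  f n j * j`!%:R <= \prod_(i < n) w i * (\sum_(i < n) x i) ^+ j * \prod_(i < n - j) y i.
Proof.
elim: n j => [|n IH] j.
  by rewrite f0 !big_ord0; case: j => [|j]; rewrite ?expr0 ?mul1r ?mulr1 ?mul0r ?expr0n.
rewrite !big_ord_recr /=.
set W := \prod_(i < n) w i; set X := \sum_(i < n) x i.
have W_ge0 : 0 <= W by rewrite prodr_ge0.
have X_ge0 : 0 <= X by rewrite sumr_ge0.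
case: j => [|j].
  have := IH 0%N; rewrite fS0 fact0 subn0 big_ord_recr /= expr0 !mulr1 => IH0.
  by rewrite [W * _]mulrC -mulrA ler_wpM2l // [_ * y n]mulrC mulrCA ler_wpM2l.
rewrite fSS subSS; set Y := \prod_(i < n - j) y i.
have Y_ge0 : 0 <= Y by rewrite prodr_ge0.
have term1 : x n * f n j * j.+1`!%:R <= j.+1%:R * x n * (W * X ^+ j * Y).
  rewrite factS natrM (_ : _ * _ * _ = j.+1%:R * x n * (f n j * j`!%:R)); last by ring.
  by rewrite ler_wpM2l ?mulr_ge0.
have term2 : y n * f n j.+1 * j.+1`!%:R <= W * X ^+ j.+1 * Y.
  have [lt_jn | le_nj] := ltnP j n; last first.
    by rewrite pascal_eq0 // mulr0 mul0r !mulr_ge0 ?exprn_ge0.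
  have Y_split : Y = \prod_(i < n - j.+1) y i * y (n - j.+1)%N.
    by rewrite /Y (_ : (n - j = (n - j.+1).+1)%N) ?big_ord_recr //; lia.
  apply: le_trans (_ : y n * (W * X ^+ j.+1 * \prod_(i < n - j.+1) y i) <= _).
    by rewrite -mulrA ler_wpM2l.
  rewrite Y_split mulrCA ler_wpM2l ?mulr_ge0 ?exprn_ge0 // mulrC.
  by rewrite ler_wpM2l ?prodr_ge0 ?y_nonincr ?leq_subr.
rewrite -mulrA mulrDl; apply: le_trans (ler_wpM2l (w_ge0 n) (lerD term1 term2)) _.
have -> : w n * (j.+1%:R * x n * (W * X ^+ j * Y) + W * X ^+ j.+1 * Y)
    = w n * W * Y * (X ^+ j.+1 + j.+1%:R * x n * X ^+ j) by ring.
have -> : W * w n * (X + x n) ^+ j.+1 * Y = w n * W * Y * (X + x n) ^+ j.+1 by ring.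
by rewrite ler_wpM2l ?mulr_ge0 ?exprSD_ge_lin.
Qed.

End WeightedPascal.

Lemma ext_count_sum k n P :
  ext_count k n P = (\sum_(b < k.+1) P b * ('C(k, b) * n ^ (k - b)))%N.
Proof.
rewrite /ext_count -sum1dep_card.
rewrite (partition_big (fun v : {ffun _ -> _} => inord (zeros v) : 'I_k.+1) xpredT) //=.
apply: eq_bigr => b _; case P_b: (P b); last first.
  by rewrite big_pred0 // => v; case: eqP => [->|]; rewrite ?P_b ?andbF.
have zeros_max (v : {ffun 'I_k -> 'I_n.+1}) : (zeros v <= k)%N.
  by rewrite -[k in (_ <= k)%N]card_ord max_card.
rewrite mul1n sum1dep_card.
transitivity #|[set v : {ffun 'I_k -> 'I_n.+1} | zeros v == b]|.
  apply: eq_card => v; rewrite !inE -val_eqE /= inordK ?ltnS //.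
  by rewrite andb_idl // => /eqP ->; rewrite inord_val.
by rewrite card_ffun_fiber_size !card_ord.
Qed.

Lemma ext_count_Fj k n P : (0 < n)%N ->
  (ext_count k n P)%:R = n%:R ^+ k * Fj k n.+1 (fun b => (P b)%:R) :> rat.
Proof.
move=> n_gt0; rewrite ext_count_sum natr_sum mulr_sumr /Fj subn1; apply: eq_bigr => b _.
rewrite !natrM natrX exprB; last 2 first.
- by rewrite -ltnS.
- by rewrite unitfE pnatr_eq0 -lt0n.
by rewrite /=; ring.
Qed.

Lemma Fj_ge0 k j X : (forall b, 0 <= X b) -> 0 <= Fj k j X.
Proof. by move=> X_ge0; rewrite sumr_ge0 // => b _; rewrite !mulr_ge0 ?invr_ge0 ?exprn_ge0. Qed.

Lemma Fj_nonincr k i j X :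
  (forall b, 0 <= X b) -> (2 <= i <= j)%N -> Fj k j X <= Fj k i X.
Proof.
move=> X_ge0 /andP[i_ge2 le_ij]; rewrite ler_sum // => b _; rewrite ler_wpM2l ?mulr_ge0 //.
rewrite lef_pV2 ?posrE ?exprn_gt0 ?ltr0n ?subn_gt0 ?(leq_trans i_ge2) //.
by rewrite lerXn2r ?nnegrE ?ler0n // ler_nat leq_sub2r.
Qed.

Lemma Cprime_ge0 k C b : 0 <= Cprime k C b.
Proof. by rewrite /Cprime; case: (C b); rewrite ?subrr ?subr0. Qed.

Lemma HC_sum_Fj k n C : HC k n.+1 C = \sum_(i < n) Fj k i.+2 (fun b => (C b)%:R).
Proof.
rewrite /HC /hcoef /Fj.
under eq_bigr do rewrite mulr_sumr mulr_suml big_add1 big_mkord.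
rewrite exchange_big; apply: eq_bigr => i _; apply: eq_bigr => b _.
by rewrite subn1 /= mulrAC.
Qed.

Lemma O_C_lift_Fj k n C w : (O_C k n.+2 C w)%:R =
  n.+1%:R ^+ k *
    (Fj k n.+2 (fun b => (C b)%:R) * (if w is w'.+1 then O_C k n.+1 C w' else 0)%:R
     + Fj k n.+2 (Cprime k C) * (O_C k n.+1 C w)%:R) :> rat.
Proof.
have -> : Fj k n.+2 (Cprime k C) = Fj k n.+2 (fun b => (~~ C b)%:R).
  by apply: eq_bigr => b _; rewrite /Cprime; case: (C b); rewrite ?subrr ?subr0.
by rewrite O_C_lift natrD !natrM !ext_count_Fj // mulrDr !mulrA.
Qed.

Lemma prod_natrX_fact (R : comPzSemiRingType) n k :
  \prod_(i < n) i.+1%:R ^+ k = (n`! ^ k)%:R :> R.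
Proof. by rewrite prodrXl -natr_prod natrX fact_prod big_add1 /= big_mkord. Qed.

Lemma O_C_bound k (C : {ffun 'I_k.+1 -> bool}) n j :
  (O_C k n.+1 C (j + C ord_max))%:R * j`!%:R
    <= (n`! ^ k)%:R * HC k n.+1 C ^+ j * \prod_(i < n - j) Fj k i.+2 (Cprime k C) :> rat.
Proof.
pose x i := Fj k i.+2 (fun b => (C b)%:R); pose y i := Fj k i.+2 (Cprime k C).
rewrite -prod_natrX_fact HC_sum_Fj.
apply: (@pascal_bound _ (fun i => i.+1%:R ^+ k) x y
  (fun n j => (O_C k n.+1 C (j + C ord_max))%:R)).
- by move=> i; rewrite exprn_ge0.
- by move=> i; rewrite Fj_ge0.
- by move=> i; rewrite Fj_ge0 // => b; apply: Cprime_ge0.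
- by move=> i i' le_ii'; rewrite Fj_nonincr // => b; apply: Cprime_ge0.
- by move=> i; rewrite O_C_1 -{2}(add0n (C ord_max)) eqn_add2r.
- move=> i; rewrite add0n O_C_lift_Fj; case c_k: (C ord_max) => /=.
    by rewrite O_C_0 // mulr0 add0r.
  by rewrite mulr0 add0r.
- by move=> i i'; rewrite !addSn O_C_lift_Fj.
Qed.

Theorem theorem5p1 (k n : nat) (C : {ffun 'I_k.+1 -> bool}) (m : nat) :
  (1 <= k)%N -> (2 <= n)%N -> (1 <= m <= n)%N ->
  (O_C k n C (m + C ord_max - 1))%:R <= O_Cmax k n C m.
Proof.
move=> _ n_ge2 /andP[m_ge1 _].
case: n n_ge2 => // n _; case: m m_ge1 => // j _.
rewrite /O_Cmax addSn subn1 /= subSS big_add1 /= big_mkord.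
rewrite [_ / _ * _]mulrAC [_ / _ * _]mulrAC ler_pdivlMr ?ltr0n ?fact_gt0 //.
exact: O_C_bound.
Qed.
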